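(* For all multidistributions $\mu,\nu$ on configurations, real $w\ge0$, expectation $f$ and $c\in\{\mathit{true},\mathit{false}\}$: if $\mu\Rightarrow^w\nu$ (multi-step reduction with accumulated cost $w$), then \[ \mathbb{E}_\mu(e_c(f)) \;\ge\; [c]\cdot w + \mathbb{E}_\nu(e_c(f)). \]
   Context: Let $\mathrm{Var}$ be a finite set of integer-valued variables and $\Sigma = \mathrm{Var}\to\mathbb{Z}$ the set of stores; $\sigma[x\mapsto i]$ is the store updated at $x$. Boolean expressions $\varphi$ are evaluated on stores ($\sigma\models\varphi$). A distribution expression $d$ assigns to each store $\sigma$ a probability distribution $d(\sigma)$ on $\mathbb{Z}$. Commands: $C,D ::= \mathtt{skip} \mid \mathtt{tick}(r) \mid \mathtt{halt} \mid x :\approx d \mid \mathtt{if}_{[\psi]}(\varphi)\{C\}\{D\} \mid \mathtt{while}_{[\psi]}(\varphi)\{C\} \mid C \,\square\, D \mid C \oplus_p D \mid C;D$, with $r$ a nonnegative rational, $p\in[0,1]$. Expectations are functions $f:\Sigma\to[0,\infty]$, with pointwise operations, $\mathbf{r}$ the constant $r$, $[\varphi](\sigma)\in\{0,1\}$ the indicator, $[c]=1$ if $c=\mathit{true}$ and $0$ otherwise, $0\cdot\infty=0$. Transformer $\mathsf{et}_c$: $\mathsf{et}_c[\mathtt{skip}](f)=f$; $\mathsf{et}_c[\mathtt{tick}(r)](f)=[c]\cdot\mathbf{r}+f$; $\mathsf{et}_c[\mathtt{halt}](f)=\mathbf{0}$; $\mathsf{et}_c[x:\approx d](f)=\lambda\sigma.\sum_{i}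 d(\sigma)(i)\, f(\sigma[x\mapsto i])$; $\mathsf{et}_c[\mathtt{if}_{[\psi]}(\varphi)\{C\}\{D\}](f)=[\psi\wedge\varphi]\cdot\mathsf{et}_c[C](f)+[\psi\wedge\neg\varphi]\cdot\mathsf{et}_c[D](f)$; $\mathsf{et}_c[\mathtt{while}_{[\psi]}(\varphi)\{C\}](f)=\mathrm{lfp}\,F.\ [\psi\wedge\varphi]\cdot\mathsf{et}_c[C](F)+[\psi\wedge\neg\varphi]\cdot f$ (least fixed point, pointwise order); $\mathsf{et}_c[C\,\square\,D](f)=\max(\mathsf{et}_c[C](f),\mathsf{et}_c[D](f))$; $\mathsf{et}_c[C\oplus_p D](f)=\mathbf{p}\cdot\mathsf{et}_c[C](f)+\mathbf{(1-p)}\cdot\mathsf{et}_c[D](f)$; $\mathsf{et}_c[C;D](f)=\mathsf{et}_c[C](\mathsf{et}_c[D](f))$. Configurations: $\mathrm{Conf}=(\mathrm{Cmd}\times\Sigma)\cup\Sigma\cup\{\bot\}$; an active configuration is written $\langle C,\sigma\rangle$. A multidistribution on a set $A$ is a countable multiset $\mu$ of pairs $q:a$ with $a\in A$, $0<q\le1$, and $\sum_{q:a\in\mu}q\le1$; $\mathbb{E}_\mu(g)=\sum_{q:a\in\mu}q\cdot g(a)$ (with multiplicity). For $0<p\le1$, $p\cdot\{q_i:a_i\}_i=\{p q_i:a_i\}_i$, and for a countable family with $p_i>0$, $\sum_ip_i\le1$, $\biguplus_i p_i\cdot\mu_i$ is the multiset union of the $p_i\cdot\mu_i$. For $h:A\to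 B$, $\overline h(\{q_i:a_i\}_i)=\{q_i:h(a_i)\}_i$. A configuration $\gamma$ is identified with $\{1:\gamma\}$; entries with probability $0$ are omitted. The one-step relation $\gamma\to_w\mu$ is the least relation closed under: $\langle\mathtt{skip},\sigma\rangle\to_0\sigma$; $\langle\mathtt{tick}(r),\sigma\rangle\to_r\sigma$; $\langle\mathtt{halt},\sigma\rangle\to_0\bot$; $\langle x:\approx d,\sigma\rangle\to_0\{d(\sigma)(i):\sigma[x\mapsto i]\mid d(\sigma)(i)>0\}$; $\langle\mathtt{if}_{[\psi]}(\varphi)\{C\}\{D\},\sigma\rangle\to_0\langle C,\sigma\rangle$ if $\sigma\models\psi\wedge\varphi$, $\to_0\langle D,\sigma\rangle$ if $\sigma\models\psi\wedge\neg\varphi$, $\to_0\bot$ if $\sigma\models\neg\psi$; $\langle\mathtt{while}_{[\psi]}(\varphi)\{C\},\sigma\rangle\to_0\langle C;\mathtt{while}_{[\psi]}(\varphi)\{C\},\sigma\rangle$ if $\sigma\models\psi\wedge\varphi$, $\to_0\sigma$ if $\sigma\models\psi\wedge\neg\varphi$, $\to_0\bot$ if $\sigma\models\neg\psi$; $\langle C\,\square\,D,\sigma\rangle\to_0\langle C,\sigma\rangle$ and $\to_0\langle D,\sigma\rangle$; $\langle C\oplus_pD,\sigma\rangle\to_0\{p:\langle C,\sigma\rangle,1-p:\langle D,\sigma\rangle\}$; if $\langle C,\sigma\rangle\to_r\mu$ then $\langle C;D,\sigma\rangle\to_r\overline{\kappa_D}(\mu)$, where $\kappa_D(\langle C',\sigma'\rangle)=\langle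 C';D,\sigma'\rangle$, $\kappa_D(\sigma')=\langle D,\sigma'\rangle$, $\kappa_D(\bot)=\bot$. The lifted relation $\mu\Rightarrow_w\nu$ on multidistributions is the least relation with: $\mu\Rightarrow_0\mu$; $\{1:\gamma\}\Rightarrow_w\mu$ whenever $\gamma\to_w\mu$; and if $\mu_i\Rightarrow_{w_i}\nu_i$ for all $i$ in a countable index set $I$, $p_i>0$, $\sum_ip_i\le1$, then $\biguplus_ip_i\cdot\mu_i\Rightarrow_{w}\biguplus_ip_i\cdot\nu_i$ with $w=\sum_ip_iw_i$. The multi-step relation $\Rightarrow^w$ is the least relation with: $\mu\Rightarrow^0\mu$; $\mu\Rightarrow^w\nu$ whenever $\mu\Rightarrow_w\nu$; and $\mu\Rightarrow^{w_1+w_2}\nu$ whenever $\mu\Rightarrow^{w_1}\mu'$ and $\mu'\Rightarrow^{w_2}\nu$. For an expectation $f$, $e_c(f):\mathrm{Conf}\to[0,\infty]$ is defined by $e_c(f)(\langle C,\sigma\rangle)=\mathsf{et}_c[C](f)(\sigma)$, $e_c(f)(\sigma)=f(\sigma)$, $e_c(f)(\bot)=0$. *)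

From HB Require Import structures.
From mathcomp Require Import all_boot all_order all_algebra.
From mathcomp Require Import all_classical all_reals.
From mathcomp Require Import ereal esum.
Set Implicit Arguments. Unset Strict Implicit. Unset Printing Implicit Defensive.
Import Order.TTheory GRing.Theory Num.Theory.
Local Open Scope classical_set_scope.
Local Open Scope ring_scope.

Section Lang.
Context {R : realType} {Var : finType}.

Definition store := Var -> int.
Definition upd (s : store) (x : Var) (i : int) : store :=
  fun y => if y == x then i else s y.

Record pdist := PDist {
  pmf : int -> R;
  pmf_ge0 : forall i, 0 <= pmf i;
  pmf_sum1 : (\esum_(i in [set: int]) (pmf i)%:E = 1)%E }.

(* commands; Boolean expressions and distribution expressions are semantic *)
Inductive cmd :=
| Skip
| Tick (r : rat) (hr : 0 <= r)
| Halt
| Assign (x : Var) (d : store -> pdist)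
| If (psi phi : store -> bool) (C D : cmd)
| While (psi phi : store -> bool) (C : cmd)
| NDet (C D : cmd)
| PChoice (p : R) (hp : 0 <= p <= 1) (C D : cmd)
| Seq (C D : cmd).
Arguments Tick : clear implicits.
Arguments PChoice : clear implicits.

(* expectations: store -> [0, +oo] (nonnegativity imposed where needed) *)
Definition expect := store -> \bar R.

Definition ind (b : bool) : \bar R := if b then 1%E else 0%E.

(* least fixed point of a (monotone) transformer on nonnegative expectations,
   Knaster-Tarski: pointwise infimum of all nonnegative prefixed points *)
Definition lfp (Phi : expect -> expect) : expect :=
  fun s => ereal_inf [set F s | F in
     [set F : expect | (forall t, 0 <= F t)%E /\ (forall t, (Phi F t <= F t)%E)]].

Fixpoint et (c : bool) (C : cmd) (f : expect) {struct C} : expect :=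
  match C with
  | Skip => f
  | Tick r _ => fun s => (ind c * (ratr r)%:E + f s)%E
  | Halt => fun _ => 0%E
  | Assign x d => fun s =>
      \esum_(i in [set: int]) ((pmf (d s) i)%:E * f (upd s x i))%E
  | If psi phi C1 D1 => fun s =>
      (ind (psi s && phi s) * et c C1 f s + ind (psi s && ~~ phi s) * et c D1 f s)%E
  | While psi phi C1 =>
      lfp (fun F s => (ind (psi s && phi s) * et c C1 F s
                       + ind (psi s && ~~ phi s) * f s)%E)
  | NDet C1 D1 => fun s => maxe (et c C1 f s) (et c D1 f s)
  | PChoice p _ C1 D1 => fun s =>
      (p%:E * et c C1 f s + (1 - p)%:E * et c D1 f s)%E
  | Seq C1 D1 => et c C1 (et c D1 f)
  end.

Inductive config :=
| Active (C : cmd) (s : store)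
| Term (s : store)
| Bot.

(* multidistributions: countable multisets of pairs q:a, represented by a
   nat-indexed family of weights and elements; entries of weight 0 are
   considered absent *)
Record mdistr (A : Type) := MDistr {
  mw : nat -> R;
  mel : nat -> A;
  mw_ge0 : forall n, 0 <= mw n;
  mw_sum : (\esum_(n in [set: nat]) (mw n)%:E <= 1)%E }.

(* two indexed families represent the same multiset: a weight- and
   element-preserving bijection between their positive-weight entries *)
Definition fam_equiv (A J K : Type) (wJ : J -> R) (eJ : J -> A)
    (wK : K -> R) (eK : K -> A) : Prop :=
  exists (f : {j : J | 0 < wJ j} -> {k : K | 0 < wK k})
         (g : {k : K | 0 < wK k} -> {j : J | 0 < wJ j}),
    cancel f g /\ cancel g f /\
    (forall j, wK (proj1_sig (f j)) = wJ (proj1_sig j) /\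
               eK (proj1_sig (f j)) = eJ (proj1_sig j)).

Definition is_dirac (A : Type) (a : A) (mu : mdistr A) : Prop :=
  fam_equiv (fun _ : unit => 1) (fun _ => a) (@mw A mu) (@mel A mu).

Definition is_union (A : Type) (I : Type) (p : I -> R) (mus : I -> mdistr A)
    (mu : mdistr A) : Prop :=
  fam_equiv (fun ij : I * nat => p ij.1 * mw (mus ij.1) ij.2)
            (fun ij : I * nat => mel (mus ij.1) ij.2)
            (@mw A mu) (@mel A mu).

Definition mexp (A : Type) (mu : mdistr A) (g : A -> \bar R) : \bar R :=
  \esum_(n in [set: nat]) ((mw mu n)%:E * g (mel mu n))%E.

Definition kappa (D : cmd) (g : config) : config :=
  match g with
  | Active C' s => Active (Seq C' D) s
  | Term s => Active D s
  | Bot => Bot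
  end.

Inductive step1 : config -> R -> mdistr config -> Prop :=
| st_skip s mu : is_dirac (Term s) mu -> step1 (Active Skip s) 0 mu
| st_tick r hr s mu : is_dirac (Term s) mu -> step1 (Active (Tick r hr) s) (ratr r) mu
| st_halt s mu : is_dirac Bot mu -> step1 (Active Halt s) 0 mu
| st_assign x d s mu :
    fam_equiv (fun i : int => pmf (d s) i) (fun i => Term (upd s x i))
              (mw mu) (mel mu) ->
    step1 (Active (Assign x d) s) 0 mu
| st_if_t psi phi C D s mu : psi s && phi s -> is_dirac (Active C s) mu ->
    step1 (Active (If psi phi C D) s) 0 mu
| st_if_f psi phi C D s mu : psi s && ~~ phi s -> is_dirac (Active D s) mu ->
    step1 (Active (If psi phi C D) s) 0 mu
| st_if_bot psi phi C D s mu : ~~ psi s -> is_dirac Bot mu ->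
    step1 (Active (If psi phi C D) s) 0 mu
| st_while_t psi phi C s mu : psi s && phi s ->
    is_dirac (Active (Seq C (While psi phi C)) s) mu ->
    step1 (Active (While psi phi C) s) 0 mu
| st_while_f psi phi C s mu : psi s && ~~ phi s -> is_dirac (Term s) mu ->
    step1 (Active (While psi phi C) s) 0 mu
| st_while_bot psi phi C s mu : ~~ psi s -> is_dirac Bot mu ->
    step1 (Active (While psi phi C) s) 0 mu
| st_ndet_l C D s mu : is_dirac (Active C s) mu -> step1 (Active (NDet C D) s) 0 mu
| st_ndet_r C D s mu : is_dirac (Active D s) mu -> step1 (Active (NDet C D) s) 0 mu
| st_pchoice p hp C D s mu :
    fam_equiv (fun b : bool => if b then p else 1 - p)
              (fun b => if b then Active C s else Active D s) (mw mu) (mel mu) ->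
    step1 (Active (PChoice p hp C D) s) 0 mu
| st_seq C D s r mu nu : step1 (Active C s) r mu ->
    fam_equiv (mw mu) (fun n => kappa D (mel mu n)) (mw nu) (mel nu) ->
    step1 (Active (Seq C D) s) r nu.

Inductive lstep : mdistr config -> R -> mdistr config -> Prop :=
| ls_refl mu : lstep mu 0 mu
| ls_single g mu0 w mu : is_dirac g mu0 -> step1 g w mu -> lstep mu0 w mu
| ls_union (I : countType) (p : I -> R) (mus nus : I -> mdistr config)
    (ws : I -> R) (mu nu : mdistr config) (w : R) :
    (forall i, 0 < p i) ->
    (\esum_(i in [set: I]) (p i)%:E <= 1)%E ->
    (forall i, lstep (mus i) (ws i) (nus i)) ->
    (w%:E = \esum_(i in [set: I]) (p i * ws i)%:E)%E ->
    is_union p mus mu -> is_union p nus nu ->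
    lstep mu w nu.

Inductive msteps : mdistr config -> R -> mdistr config -> Prop :=
| ms_refl mu : msteps mu 0 mu
| ms_step mu w nu : lstep mu w nu -> msteps mu w nu
| ms_trans mu w1 mu' w2 nu : msteps mu w1 mu' -> msteps mu' w2 nu ->
    msteps mu (w1 + w2) nu.

Definition ec (c : bool) (f : expect) (g : config) : \bar R :=
  match g with
  | Active C s => et c C f s
  | Term s => f s
  | Bot => 0%E
  end.

End Lang.

(* Every rule of the one-step relation lowers the expected value of e_c(f) by
   at least [c]·w.  For most rules this is an equation of the transformer et_c;
   for nondeterministic choice it is the max, for a loop that takes its body
   it is the fact that the least fixed point of the loop functional is a
   prefixed point, and for sequential composition it is the identity
   E_{kappa_D(mu)}(e_c(f)) = E_mu(e_c(et_c[D](f))).  Since E_mu depends only on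
   the multiset that the indexed family mu represents, E is linear over the
   countable unions of the lifted relation (Fubini for nonnegative sums), and
   the multi-step bound follows by adding up the costs. *)

From mathcomp Require Import all_boot all_order all_algebra.
From mathcomp Require Import all_classical all_reals.
From mathcomp Require Import ereal esum.
Import Order.TTheory GRing.Theory Num.Theory.
Local Open Scope classical_set_scope.
Local Open Scope ring_scope.

Section esum_lemmas.
Context {R : realType}.
Local Open Scope ereal_scope.

Lemma esumZl (T : choiceType) (D : set T) (x : R) (a : T -> \bar R) :
  (0 <= x)%R -> (forall t, 0 <= a t) ->
  \esum_(t in D) x%:E * a t = x%:E * \esum_(t in D) a t.
Proof.
move=> x0 a0; rewrite /esum -ereal_supZl//; last first.
  by apply/set0P; exists 0; exists set0; [exact: fsets_set0|rewrite fsbig_set0].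
rewrite image_comp; congr ereal_sup.
by apply: eq_imagel => X _ /=; rewrite ge0_mule_fsumr.
Qed.

Lemma esum_bool (a : bool -> \bar R) : (forall b, 0 <= a b) ->
  \esum_(b in [set: bool]) a b = a true + a false.
Proof.
move=> a0; rewrite (esumID [set true]) // setTI.
have -> : [set: bool] `&` ~` [set true] = [set false].
  by apply/seteqP; split => -[] //=; case.
by rewrite !esum_set1.
Qed.

Lemma esum_pos_weights {A : Type} {T : choiceType} (w : T -> R) (e : T -> A)
    (g : A -> \bar R) :
  (forall t, 0 <= w t)%R -> (forall a, 0 <= g a) ->
  \esum_(t in [set: T]) (w t)%:E * g (e t) =
  \esum_(t in [set t | 0 < w t]%R) (w t)%:E * g (e t).
Proof.
move=> w0 g0; rewrite (esumID [set t | 0 < w t]%R) => [|t _]; last first.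
  by rewrite mule_ge0// lee_fin.
rewrite !setTI [X in _ + X]esum1 ?adde0// => t /= wt_le0.
suff -> : w t = 0%R by rewrite mul0e.
by apply/eqP; rewrite eq_le w0 andbT leNgt; apply/negP.
Qed.

Lemma esum_fam_equiv {A : Type} {J K : choiceType} (k0 : K)
    (wJ : J -> R) (eJ : J -> A) (wK : K -> R) (eK : K -> A) (g : A -> \bar R) :
  (forall j, 0 <= wJ j)%R -> (forall k, 0 <= wK k)%R -> (forall a, 0 <= g a) ->
  fam_equiv wJ eJ wK eK ->
  \esum_(j in [set: J]) (wJ j)%:E * g (eJ j) =
  \esum_(k in [set: K]) (wK k)%:E * g (eK k).
Proof.
move=> wJ0 wK0 g0 [F [G [FG [GF FP]]]]; rewrite !esum_pos_weights//.
(* Off the positive-weight indices, over which both sums now range, [e] is junk. *)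
pose e j :=
  if pselect (0 < wJ j)%R is left h then proj1_sig (F (exist _ j h)) else k0.
have eE j (h : (0 < wJ j)%R) : e j = proj1_sig (F (exist _ j h)).
  by rewrite /e; case: pselect => // h'; congr (proj1_sig (F _)); exact: eq_exist.
rewrite (reindex_esum [set j | 0 < wJ j]%R _ e).
  apply: eq_esum => j /= h; rewrite (eE j h).
  by case: (FP (exist _ j h)) => /= -> ->.
split.
- by move=> j /= h; rewrite (eE j h); case: (F _).
- move=> i j /[!inE] /= hi hj; rewrite (eE i hi) (eE j hj) => Fij.
  have /(congr1 (fun k => proj1_sig (G k))) : F (exist _ i hi) = F (exist _ j hj).
    by move: Fij; case: (F _) => ? ?; case: (F _) => ? ? /= ?; exact: eq_exist.
  by rewrite !FG.
- move=> k /= hk; case Gk: (G (exist _ k hk)) => [j hj].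
  by exists j => //; rewrite (eE j hj) -Gk GF.
Qed.

End esum_lemmas.

Section expectation.
Context {R : realType} {A : Type}.
Implicit Types (mu : @mdistr R A) (g : A -> \bar R).
Local Open Scope ereal_scope.

Lemma mexp_ge0 mu g : (forall a, 0 <= g a) -> 0 <= mexp mu g.
Proof.
by move=> g0; apply: esum_ge0 => n _; rewrite mule_ge0// lee_fin mw_ge0.
Qed.

Lemma mexp_fam_equiv {J : choiceType} {wJ : J -> R} {eJ : J -> A} {mu g} :
  (forall j, 0 <= wJ j)%R -> (forall a, 0 <= g a) ->
  fam_equiv wJ eJ (mw mu) (mel mu) ->
  mexp mu g = \esum_(j in [set: J]) (wJ j)%:E * g (eJ j).
Proof.
by move=> wJ0 g0; rewrite /mexp => /(esum_fam_equiv 0%N) <-//; apply: mw_ge0.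
Qed.

Lemma mexp_dirac {a mu g} :
  (forall a, 0 <= g a) -> is_dirac a mu -> mexp mu g = g a.
Proof.
move=> g0 /mexp_fam_equiv-> //.
have -> : [set: unit] = [set tt] by apply/seteqP; split => -[].
by rewrite esum_set1 mul1e.
Qed.

Lemma mexp_union {I : countType} {p : I -> R} {mus : I -> mdistr A} {mu g} :
  (forall i, 0 < p i)%R -> (forall a, 0 <= g a) -> is_union p mus mu ->
  mexp mu g = \esum_(i in [set: I]) (p i)%:E * mexp (mus i) g.
Proof.
move=> p_gt0 g0 /mexp_fam_equiv-> //; last first.
  by move=> [i n]; rewrite mulr_ge0 ?mw_ge0// ltW.
have pmu_ge0 i n : 0 <= (mw (mus i) n)%:E * g (mel (mus i) n).
  by rewrite mule_ge0// lee_fin mw_ge0.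
under [RHS]eq_esum => i _ do rewrite /mexp -esumZl ?(ltW (p_gt0 i))//.
rewrite esum_esum => [|i n _ _]; last by rewrite mule_ge0// lee_fin ltW.
have -> : [set: I] `*`` (fun=> [set: nat]) = [set: I * nat] by apply/seteqP.
by apply: eq_esum => -[i n] _; rewrite EFinM muleA.
Qed.

End expectation.

Section transformer.
Context {R : realType} {Var : finType}.
Local Notation expect := (@expect R Var).
Local Notation cmd := (@cmd R Var).
Local Notation config := (@config R Var).
Variable c : bool.
Local Open Scope ereal_scope.

Lemma ind_ge0 b : 0 <= @ind R b.
Proof. by case: b. Qed.

Lemma ind_mulEFin b (x : R) : ind b * x%:E = (b%:R * x)%:E.
Proof. by case: b; rewrite /ind ?mul1e ?mul0e ?mul1r ?mul0r. Qed.

Lemma lfp_ge0 (Phi : expect -> expect) s : 0 <= lfp Phi s.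
Proof. by apply: le_ereal_inf_tmp => _ [F [F0 _] <-]. Qed.

Lemma et_ge0 {C : cmd} {f : expect} :
  (forall s, 0 <= f s) -> forall s, 0 <= et c C f s.
Proof.
elim: C f => [|r hr||x d|psi phi C1 IH1 D1 IH2|psi phi C1 IH1|C1 IH1 D1 IH2
  |p /andP[p0 p1] C1 IH1 D1 IH2|C1 IH1 D1 IH2] f f0 s //=.
- by rewrite adde_ge0// mule_ge0 ?ind_ge0// lee_fin ler0q.
- by apply: esum_ge0 => i _; rewrite mule_ge0// lee_fin pmf_ge0.
- by rewrite adde_ge0// mule_ge0 ?ind_ge0 ?IH1 ?IH2.
- exact: lfp_ge0.
- by rewrite le_max IH1.
- by rewrite adde_ge0// mule_ge0 ?IH1 ?IH2// lee_fin subr_ge0.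
- exact/IH1/IH2.
Qed.

Lemma le_et (C : cmd) (f g : expect) : (forall s, 0 <= f s) ->
  (forall s, f s <= g s) -> forall s, et c C f s <= et c C g s.
Proof.
elim: C f g => [|r hr||x d|psi phi C1 IH1 D1 IH2|psi phi C1 IH1|C1 IH1 D1 IH2
  |p /andP[p0 p1] C1 IH1 D1 IH2|C1 IH1 D1 IH2] f g f0 fg s //=.
- by rewrite leeD2l.
- by apply: le_esum => i _; rewrite lee_wpmul2l// lee_fin pmf_ge0.
- by rewrite leeD// lee_wpmul2l ?ind_ge0 ?IH1 ?IH2.
- apply: ereal_inf_le_tmp => _ [F [F0 FP] <-]; exists F => //; split => // t.
  by apply: le_trans (FP t); rewrite leeD2l// lee_wpmul2l ?ind_ge0.
- by rewrite le_max2 ?IH1 ?IH2.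
- by rewrite leeD// lee_wpmul2l ?IH1 ?IH2// lee_fin subr_ge0.
- by apply: IH1; [exact: et_ge0 | exact: IH2].
Qed.

Lemma et_while_unfold psi phi (C : cmd) {f : expect} s : (forall s, 0 <= f s) ->
  ind (psi s && phi s) * et c C (et c (While psi phi C) f) s
    + ind (psi s && ~~ phi s) * f s <= et c (While psi phi C) f s.
Proof.
move=> f0; apply: le_ereal_inf_tmp => _ [F [F0 FP] <-].
apply: le_trans (FP s); rewrite leeD2r// lee_wpmul2l ?ind_ge0//.
apply: le_et => [t|t]; first exact: lfp_ge0.
by apply: ereal_inf_lbound; exists F.
Qed.

Lemma ec_ge0 {f : expect} : (forall s, 0 <= f s) -> forall g, 0 <= ec c f g.
Proof. by move=> f0 [C s|s|] //=; exact: et_ge0. Qed.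

Lemma mexp_kappa {D : cmd} {mu nu : mdistr config} {f : expect} :
  (forall s, 0 <= f s) ->
  fam_equiv (mw mu) (fun n => kappa D (mel mu n)) (mw nu) (mel nu) ->
  mexp nu (ec c f) = mexp mu (ec c (et c D f)).
Proof.
move=> f0 /mexp_fam_equiv -> //; [|exact: mw_ge0|exact: ec_ge0].
by apply: eq_esum => n _; case: (mel mu n).
Qed.

End transformer.

Section soundness.
Context {R : realType} {Var : finType}.
Local Notation expect := (@expect R Var).
Local Notation config := (@config R Var).
Variable c : bool.
Local Open Scope ereal_scope.

Lemma step1_ge0 (g : config) w mu : step1 g w mu -> (0 <= w)%R.
Proof. by elim => //= r hr *; rewrite ler0q. Qed.

Lemma step1_ec_bound {g : config} {w mu} : step1 g w mu ->
  forall f : expect, (forall s, 0 <= f s) ->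
  ind c * w%:E + mexp mu (ec c f) <= ec c f g.
Proof.
elim=> {g w mu} [s mu Hd|r hr s mu Hd|s mu Hd|x d s mu Hmu
  |psi phi C D s mu /andP[Hpsi Hphi] Hd|psi phi C D s mu /andP[Hpsi Hphi] Hd
  |psi phi C D s mu Hpsi Hd|psi phi C s mu /andP[Hpsi Hphi] Hd
  |psi phi C s mu /andP[Hpsi Hphi] Hd|psi phi C s mu Hpsi Hd|C D s mu Hd
  |C D s mu Hd|p hp C D s mu Hmu|C D s r mu nu _ IH Hnu] f f0;
  (* [Hd] names the Dirac target of every rule that has one. *)
  rewrite ?(mexp_dirac (ec_ge0 c f0) Hd) ?mule0 ?add0e /=.
- by [].
- by [].
- by [].
- by rewrite (mexp_fam_equiv _ _ Hmu) //; [exact: pmf_ge0 | exact: ec_ge0].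
- by rewrite Hpsi Hphi /ind mul1e mul0e adde0.
- by rewrite Hpsi (negbTE Hphi) /ind mul1e mul0e add0e.
- by rewrite (negbTE Hpsi) /ind !mul0e adde0.
- have := et_while_unfold c psi phi C s f0.
  by rewrite Hpsi Hphi /ind mul1e mul0e adde0.
- have := et_while_unfold c psi phi C s f0.
  by rewrite Hpsi (negbTE Hphi) /ind mul1e mul0e add0e.
- exact: lfp_ge0.
- by rewrite le_max lexx.
- by rewrite le_max lexx orbT.
- case/andP: hp => p_ge0 p_le1.
  rewrite (mexp_fam_equiv _ _ Hmu) ?esum_bool //; last exact: ec_ge0.
    by case; rewrite mule_ge0 ?ec_ge0// lee_fin ?subr_ge0.
  by case; rewrite ?subr_ge0.
- by rewrite (mexp_kappa c f0 Hnu); apply/IH/et_ge0.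
Qed.

Lemma lstep_ge0 (mu nu : mdistr config) w : lstep mu w nu -> (0 <= w)%R.
Proof.
elim=> {mu nu w} [//|g mu w nu _ /step1_ge0 //|I p mus nus ws mu nu w p_gt0 _ _].
move=> ws_ge0 Hw _ _.
by rewrite -lee_fin Hw esum_ge0// => i _; rewrite lee_fin mulr_ge0// ltW.
Qed.

Lemma lstep_ec_bound (f : expect) (mu nu : mdistr config) w :
  (forall s, 0 <= f s) -> lstep mu w nu ->
  ind c * w%:E + mexp nu (ec c f) <= mexp mu (ec c f).
Proof.
move=> f0; elim=> {mu w nu} [mu|g mu w nu Hd Hstep|I p mus nus ws mu nu w p_gt0 _].
- by rewrite mule0 add0e.
- by rewrite (mexp_dirac (ec_ge0 c f0) Hd); exact: (step1_ec_bound Hstep f f0).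
move=> Hsteps IH Hw Hmu Hnu.
have ecf_ge0 := ec_ge0 c f0.
rewrite (mexp_union p_gt0 ecf_ge0 Hmu) (mexp_union p_gt0 ecf_ge0 Hnu).
have p_ge0 i : 0 <= (p i)%:E by rewrite lee_fin ltW.
have ws_ge0 i : (0 <= ws i)%R by exact: lstep_ge0 (Hsteps i).
have cost_ge0 i : 0 <= ind c * (ws i)%:E by rewrite mule_ge0 ?ind_ge0 ?lee_fin.
have costE : ind c * w%:E = \esum_(i in [set: I]) (p i)%:E * (ind c * (ws i)%:E).
  rewrite ind_mulEFin EFinM Hw -esumZl ?ler0n// => [|i]; last first.
    by rewrite lee_fin mulr_ge0// ltW.
  by apply: eq_esum => i _; rewrite ind_mulEFin -!EFinM mulrCA.
rewrite costE -esumD => [|i _|i _]; last 2 first.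
- by rewrite mule_ge0.
- by rewrite mule_ge0// mexp_ge0.
by apply: le_esum => i _; rewrite -ge0_muleDr ?mexp_ge0// lee_wpmul2l.
Qed.

Lemma msteps_ec_bound (f : expect) (mu nu : mdistr config) w :
  (forall s, 0 <= f s) -> msteps mu w nu ->
  ind c * w%:E + mexp nu (ec c f) <= mexp mu (ec c f).
Proof.
move=> f0; elim=> {mu w nu} [mu|mu w nu|mu w1 mu' w2 nu _ IH1 _ IH2].
- by rewrite mule0 add0e.
- exact: lstep_ec_bound.
rewrite ind_mulEFin mulrDr EFinD -addeA -!ind_mulEFin.
exact: le_trans (leeD2l _ IH2) IH1.
Qed.

End soundness.

Theorem mainTheorem5 (R : realType) (Var : finType)
    (mu nu : @mdistr R (@config R Var)) (w : R) (f : @expect R Var) (c : bool) :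
  0 <= w ->
  (forall s, 0 <= f s)%E ->
  msteps mu w nu ->
  (ind c * w%:E + mexp nu (ec c f) <= mexp mu (ec c f))%E.
Proof. by move=> _ f0; apply: msteps_ec_bound. Qed.
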